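(* For every metrizable space $X$, the set $AM(X)$ of bounded admissible metrics on $X$ is dense in the space $PM(X)$ of continuous bounded pseudometrics on $X$, where $PM(X)$ carries the topology of uniform convergence (induced by the sup-metric $D(f,g) = \sup_{(x,y) \in X^2}|f(x,y) - g(x,y)|$).
   Context: A pseudometric on $X$ is continuous if it is continuous as a function $X^2 \to \mathbb{R}$; a metric on $X$ is admissible if it induces the topology of $X$. Both $PM(X)$ and $AM(X)$ are regarded as subspaces of the space $C(X^2)$ of continuous bounded real-valued functions on $X^2$ with the uniform convergence topology. *)

From HB Require Import structures.
From mathcomp Require Import all_boot all_order all_algebra.
From mathcomp Require Import all_classical all_reals topology normedtype.
Set Implicit Arguments. Unset Strict Implicit. Unset Printing Implicit Defensive.
Import Order.TTheory GRing.Theory Num.Theory.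
Import numFieldNormedType.Exports.
Local Open Scope classical_set_scope.
Local Open Scope ring_scope.

Section Defs.
Variables (R : realType) (X : topologicalType).

Definition is_pseudometric (d : X -> X -> R) : Prop :=
  [/\ forall x, d x x = 0,
      forall x y, 0 <= d x y,
      forall x y, d x y = d y x &
      forall x y z, d x z <= d x y + d y z].

Definition is_metric (d : X -> X -> R) : Prop :=
  is_pseudometric d /\ (forall x y, d x y = 0 -> x = y).

Definition continuous_pm (d : X -> X -> R) : Prop :=
  continuous (fun p : X * X => d p.1 p.2).

Definition bounded_fun2 (d : X -> X -> R) : Prop :=
  exists M : R, forall x y, `|d x y| <= M.

Definition d_open (d : X -> X -> R) (U : set X) : Prop :=
  forall x, U x -> exists2 e : R, 0 < e & [set y | d x y < e] `<=` U.

Definition admissible (d : X -> X -> R) : Prop :=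
  is_metric d /\ (forall U : set X, open U <-> d_open d U).

Definition metrizable : Prop := exists d : X -> X -> R, admissible d.

Definition in_PM (d : X -> X -> R) : Prop :=
  [/\ is_pseudometric d, continuous_pm d & bounded_fun2 d].

(* AM(X): bounded admissible metrics (automatically continuous) *)
Definition in_AM (d : X -> X -> R) : Prop :=
  [/\ admissible d, continuous_pm d & bounded_fun2 d].

End Defs.

From HB Require Import structures.
From mathcomp Require Import all_boot all_order all_algebra.
From mathcomp Require Import all_classical all_reals topology normedtype.
From mathcomp Require Import lra.
Set Implicit Arguments. Unset Strict Implicit. Unset Printing Implicit Defensive.
Import Order.TTheory GRing.Theory Num.Theory.
Import numFieldNormedType.Exports.
Local Open Scope classical_set_scope.
Local Open Scope ring_scope.

(* Take an admissible metric m and put rho = d + (eps/2) min(m, 1).  Then rho is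
   a continuous bounded pseudometric within eps/2 of d.  It is a metric
   inducing the topology of X because it is continuous (so rho-open sets are
   open) and dominates (eps/2) min(m, 1) (so open sets, being m-open, are
   rho-open). *)

Lemma min1_le_add (R : realDomainType) (a b e : R) :
  0 <= b -> 0 <= e -> a <= b + e -> Num.min a 1 <= Num.min b 1 + Num.min e 1.
Proof.
by move=> b0 e0 h; case: (leP a 1); case: (leP b 1); case: (leP e 1); lra.
Qed.

Section Pseudometrics.
Variables (R : realType) (X : topologicalType).
Implicit Types (d e m rho : X -> X -> R) (U : set X).

Definition min1 d x y := Num.min (d x y) 1.

Lemma pseudometric_dist_le d : is_pseudometric d ->
  forall x y x' y', `|d x y - d x' y'| <= d x x' + d y y'.
Proof.
case=> _ _ dsym dtri x y x' y'; rewrite ler_norml; apply/andP; split.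
- have := dtri x' x y'; have := dtri x y y'; rewrite (dsym x' x); lra.
- have := dtri x x' y; have := dtri x' y' y; rewrite (dsym y' y); lra.
Qed.

Lemma continuous_pmP d : is_pseudometric d ->
  continuous_pm d <-> forall x r, 0 < r -> nbhs x [set y | d x y < r].
Proof.
move=> dpm; have [d0 dge0 _ _] := dpm; split.
- move=> dcont x r r0; have /cvgrPdist_lt/(_ r r0) := dcont (x, x).
  case=> [[A1 A2] [/= A1x A2x] hA]; apply: filterS A2x => y A2y /=.
  have := hA (x, y) (conj (nbhs_singleton A1x) A2y).
  by rewrite /= d0 sub0r normrN ger0_norm.
- move=> balls [a b]; apply/cvgrPdist_lt => r r0.
  exists ([set y | d a y < r / 2], [set y | d b y < r / 2]).
    by split; apply: balls; rewrite divr_gt0.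
  move=> [q1 q2] [/= h1 h2].
  by apply: le_lt_trans (pseudometric_dist_le dpm a b q1 q2) _; lra.
Qed.

Lemma d_open_ball d x r : is_pseudometric d -> d_open d [set y | d x y < r].
Proof.
case=> _ _ _ dtri y /= hy; exists (r - d x y); first by rewrite subr_gt0.
by move=> z /= hz; have := dtri x y z; lra.
Qed.

Lemma admissible_continuous m : admissible m -> continuous_pm m.
Proof.
case=> [[mpm _] mopen]; apply/(continuous_pmP mpm) => x r r0.
apply: open_nbhs_nbhs; split; first exact/mopen/d_open_ball.
by have [m0 _ _ _] := mpm; rewrite /= m0.
Qed.

Lemma open_of_d_open d U : is_pseudometric d -> continuous_pm d ->
  d_open d U -> open U.
Proof.
move=> dpm dcont hU; rewrite openE => x Ux; have [r r0 hr] := hU x Ux.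
exact: filterS hr ((continuous_pmP dpm).1 dcont x r r0).
Qed.

Lemma admissible_dominating m rho c : admissible m ->
  is_pseudometric rho -> continuous_pm rho -> 0 < c ->
  (forall x y, c * min1 m x y <= rho x y) -> admissible rho.
Proof.
move=> [[[_ mge0 _ _] meq] mopen] rhopm rhocont c0 dom.
have small x y r : rho x y < c * Num.min r 1 -> m x y < r.
  move=> /(le_lt_trans (dom x y)); rewrite ltr_pM2l // /min1.
  by case: (leP (m x y) 1); case: (leP r 1); lra.
split; [split => // x y rxy0 | move=> U; split].
- apply: meq; apply/eqP; rewrite eq_le mge0 andbT leNgt; apply/negP => mxy0.
  suff: m x y < m x y by rewrite ltxx.
  by apply: small; rewrite rxy0 mulr_gt0 // lt_min mxy0 ltr01.
- move=> /mopen hU x Ux; have [r r0 hr] := hU x Ux.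
  exists (c * Num.min r 1); first by rewrite mulr_gt0 // lt_min r0 ltr01.
  by move=> y /small; apply: hr.
- exact: open_of_d_open.
Qed.

Lemma in_PMD d e : in_PM d -> in_PM e -> in_PM (fun x y => d x y + e x y).
Proof.
case=> [[d0 dge0 dsym dtri] dcont [Md hMd]].
case=> [[e0 ege0 esym etri] econt [Me hMe]]; split.
- split=> [x|x y|x y|x y z]; first by rewrite d0 e0 addr0.
  + by rewrite addr_ge0.
  + by rewrite dsym esym.
  + by have := dtri x y z; have := etri x y z; lra.
- by move=> p; apply: cvgD; [apply: dcont | apply: econt].
- by exists (Md + Me) => x y; rewrite (le_trans (ler_normD _ _)) ?lerD.
Qed.

Lemma in_PMZ c d : 0 <= c -> in_PM d -> in_PM (fun x y => c * d x y).
Proof.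
move=> c0 [[d0 dge0 dsym dtri] dcont [M hM]]; split.
- split=> [x|x y|x y|x y z]; first by rewrite d0 mulr0.
  + by rewrite mulr_ge0.
  + by rewrite dsym.
  + by rewrite -mulrDr ler_wpM2l.
- by move=> p; apply: cvgMl_tmp; apply: dcont.
- by exists (c * M) => x y; rewrite normrM ger0_norm // ler_wpM2l.
Qed.

Lemma in_PM_min1 m : is_pseudometric m -> continuous_pm m -> in_PM (min1 m).
Proof.
rewrite /min1 => -[m0 mge0 msym mtri] mcont; split.
- split=> [x|x y|x y|x y z] /=; first by rewrite m0 (min_l ler01).
  + by rewrite le_min mge0 ler01.
  + by rewrite msym.
  + exact: min1_le_add.
- by move=> p; apply: continuous_min; [apply: mcont | apply: cst_continuous].
- by exists 1 => x y; rewrite ger0_norm ?le_min ?mge0 ?ler01 ?ge_min ?lexx ?orbT.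
Qed.

End Pseudometrics.

Theorem proposition3 (R : realType) (X : topologicalType) :
  metrizable R X ->
  forall d : X -> X -> R, in_PM d ->
  forall eps : R, 0 < eps ->
  exists rho : X -> X -> R, in_AM rho /\
    exists2 c : R, c < eps & forall x y : X, `|d x y - rho x y| <= c.
Proof.
move=> [m m_adm] d dPM eps eps0.
have c0 : 0 < eps / 2 by rewrite divr_gt0.
have m_pm := m_adm.1.1.
have m1PM := in_PM_min1 m_pm (admissible_continuous m_adm).
have m1_ge0 x y : 0 <= min1 m x y by have [[_ +]] := m1PM.
have m1_le1 x y : min1 m x y <= 1 by rewrite /min1 ge_min lexx orbT.
set rho := fun x y => d x y + eps / 2 * min1 m x y.
have [rho_pm rho_cont rho_bd] : in_PM rho := in_PMD dPM (in_PMZ (ltW c0) m1PM).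
have rho_adm : admissible rho.
  apply: admissible_dominating m_adm rho_pm rho_cont c0 _ => x y.
  by rewrite lerDr; have [[_ +]] := dPM.
exists rho; split=> //; exists (eps / 2); first lra.
move=> x y; rewrite /rho opprD addrA subrr add0r normrN ger0_norm.
  by rewrite ger_pMr // m1_le1.
exact: mulr_ge0 (ltW c0) (m1_ge0 x y).
Qed.
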